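(* With the matrices defined in the context, $\mathbf{A_N}$ is invertible and $$\mathbf{A_N}^{-1}=(\mathbf{B}^T\mathbf{B})^\dagger+(\mathbf{C}^T\mathbf{C})^\dagger .$$
   Context: Fix an integer $n\ge 2$ and set $h=1/n$. Let $I_m$ denote the $m\times m$ identity matrix and $\otimes$ the Kronecker product. Let $\mathrm{B}\in\mathbb{R}^{n\times(n-1)}$ be $\mathrm{B}=\frac1h M$, where $M_{i,i}=1$ and $M_{i+1,i}=-1$ for $1\le i\le n-1$, all other entries $0$. Define $\mathrm{B}^u_x=I_n\otimes \mathrm{B}$, $\mathrm{B}^v_y=\mathrm{B}\otimes I_n$, $\mathrm{B}^q_x=I_{n-1}\otimes\mathrm{B}$, $\mathrm{B}^q_y=\mathrm{B}\otimes I_{n-1}$. Let $\mathbf{B}=\begin{bmatrix}-\mathrm{B}^u_x & -\mathrm{B}^v_y\end{bmatrix}\in\mathbb{R}^{n^2\times 2n(n-1)}$ and $\mathbf{C}=\begin{bmatrix}-(\mathrm{B}^q_y)^T & (\mathrm{B}^q_x)^T\end{bmatrix}\in\mathbb{R}^{(n-1)^2\times 2n(n-1)}$, and let $\mathbf{A_N}=\mathbf{B}^T\mathbf{B}+\mathbf{C}^T\mathbf{C}$ (the Neumann velocity Laplacian). The superscript $\dagger$ denotes the Moore–Penrose pseudoinverse. *)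

From HB Require Import structures.
From mathcomp Require Import all_boot all_order all_algebra.
From mathcomp Require Import reals.
From Stdlib Require Import ClassicalEpsilon.
Set Implicit Arguments. Unset Strict Implicit. Unset Printing Implicit Defensive.
Import Order.TTheory GRing.Theory Num.Theory.
Local Open Scope ring_scope.

(* index decoding for the Kronecker product: k = a * p + b  <-> (a, b) *)
Lemma kron_div_lt (m p : nat) (k : 'I_(m * p)) : (k %/ p < m)%N.
Proof.
case: k => k /= hk; case: p hk => [|p] hk; first by rewrite muln0 in hk.
by rewrite ltn_divLR.
Qed.

Lemma kron_mod_lt (m p : nat) (k : 'I_(m * p)) : (k %% p < p)%N.
Proof.
case: k => k /= hk; case: p hk => [|p] hk; first by rewrite muln0 in hk.
by rewrite ltn_mod.
Qed.

Definition kdiv (m p : nat) (k : 'I_(m * p)) : 'I_m := Ordinal (kron_div_lt k).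
Definition kmod (m p : nat) (k : 'I_(m * p)) : 'I_p := Ordinal (kron_mod_lt k).

Definition kron (R : pzRingType) (m1 n1 m2 n2 : nat)
  (A : 'M[R]_(m1, n1)) (B : 'M[R]_(m2, n2)) : 'M[R]_(m1 * m2, n1 * n2) :=
  \matrix_(i, j) (A (kdiv i) (kdiv j) * B (kmod i) (kmod j)).

Definition is_mp_pinv (R : realFieldType) (m n : nat)
  (A : 'M[R]_(m, n)) (X : 'M[R]_(n, m)) : Prop :=
  [/\ A *m X *m A = A, X *m A *m X = X,
      (A *m X)^T = A *m X & (X *m A)^T = X *m A].

Definition mp_pinv (R : realFieldType) (m n : nat) (A : 'M[R]_(m, n)) : 'M[R]_(n, m) :=
  epsilon (inhabits 0) (is_mp_pinv A).

Definition Mmat (R : realType) (n : nat) : 'M[R]_(n, n.-1) :=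
  \matrix_(i, j) (if nat_of_ord i == nat_of_ord j then 1
                  else if nat_of_ord i == (nat_of_ord j).+1 then -1 else 0).

Definition hstep (R : realType) (n : nat) : R := 1 / n%:R.

Definition Bmat (R : realType) (n : nat) : 'M[R]_(n, n.-1) :=
  (hstep R n)^-1 *: Mmat R n.

Definition Bux (R : realType) (n : nat) : 'M[R]_(n * n, n * n.-1) :=
  kron (1%:M : 'M[R]_n) (Bmat R n).
Definition Bvy (R : realType) (n : nat) : 'M[R]_(n * n, n.-1 * n) :=
  kron (Bmat R n) (1%:M : 'M[R]_n).
Definition Bqx (R : realType) (n : nat) : 'M[R]_(n.-1 * n, n.-1 * n.-1) :=
  kron (1%:M : 'M[R]_n.-1) (Bmat R n).
Definition Bqy (R : realType) (n : nat) : 'M[R]_(n * n.-1, n.-1 * n.-1) :=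
  kron (Bmat R n) (1%:M : 'M[R]_n.-1).

Definition boldB (R : realType) (n : nat) : 'M[R]_(n * n, n * n.-1 + n.-1 * n) :=
  row_mx (- Bux R n) (- Bvy R n).
Definition boldC (R : realType) (n : nat) :
  'M[R]_(n.-1 * n.-1, n * n.-1 + n.-1 * n) :=
  row_mx (- (Bqy R n)^T) ((Bqx R n)^T).

Definition AN (R : realType) (n : nat) : 'M[R]_(n * n.-1 + n.-1 * n) :=
  (boldB R n)^T *m boldB R n + (boldC R n)^T *m boldC R n.

(* The matrices B and C are, up to the factor 1/h, the discrete divergence and
   curl on a staggered grid.  Since the Kronecker factors I (x) M and M (x) I
   commute, B C^T = 0; hence the Gram matrices B^T B and C^T C annihilate each
   other, and for such a pair of symmetric matrices with invertible sum the
   inverse of the sum is the sum of the pseudoinverses.  Invertibility of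
   A_N = B^T B + C^T C amounts to ker B and ker C meeting only in 0: a
   curl-free field is a discrete gradient (M^T has the right inverse
   [i <= j]), and a divergence-free gradient is orthogonal to itself. *)
From HB Require Import structures.
From mathcomp Require Import all_boot all_order all_algebra.
From mathcomp Require Import reals.
From mathcomp Require Import zify.
From Stdlib Require Import ClassicalEpsilon.
Set Implicit Arguments. Unset Strict Implicit. Unset Printing Implicit Defensive.
Import Order.TTheory GRing.Theory Num.Theory.
Local Open Scope ring_scope.

Lemma kidx_lt m p (a : 'I_m) (b : 'I_p) : (a * p + b < m * p)%N.
Proof.
case: a b => a ha [b hb] /=.
have : (a.+1 * p <= m * p)%N by rewrite leq_mul2r ha orbT.
rewrite mulSn; lia.
Qed.

Definition kidx m p (a : 'I_m) (b : 'I_p) : 'I_(m * p) := Ordinal (kidx_lt a b).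

Lemma kdiv_kidx m p (a : 'I_m) (b : 'I_p) : kdiv (kidx a b) = a.
Proof.
apply: val_inj => /=; case: b => b hb /=.
by rewrite divnMDl ?(leq_ltn_trans _ hb) // divn_small // addn0.
Qed.

Lemma kmod_kidx m p (a : 'I_m) (b : 'I_p) : kmod (kidx a b) = b.
Proof. by apply: val_inj => /=; case: b => b hb /=; rewrite modnMDl modn_small. Qed.

Lemma kidxK m p (k : 'I_(m * p)) : kidx (kdiv k) (kmod k) = k.
Proof. by apply: val_inj => /=; rewrite -divn_eq. Qed.

Lemma big_kidx (V : nmodType) m p (F : 'I_(m * p) -> V) :
  \sum_k F k = \sum_(a < m) \sum_(b < p) F (kidx a b).
Proof.
rewrite pair_big /= (reindex (fun ab : 'I_m * 'I_p => kidx ab.1 ab.2)) //=.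
exists (fun k => (kdiv k, kmod k)) => [[a b] _|k _] /=.
  by rewrite kdiv_kidx kmod_kidx.
by rewrite kidxK.
Qed.

Section Kronecker.
Variable R : comPzRingType.

Lemma kronE m1 n1 m2 n2 (A : 'M[R]_(m1, n1)) (B : 'M[R]_(m2, n2)) i j :
  kron A B i j = A (kdiv i) (kdiv j) * B (kmod i) (kmod j).
Proof. by rewrite mxE. Qed.

Lemma kron_mulmx m1 n1 m2 n2 p1 p2 (A : 'M[R]_(m1, n1)) (B : 'M[R]_(m2, n2))
  (C : 'M[R]_(n1, p1)) (D : 'M[R]_(n2, p2)) :
  kron A B *m kron C D = kron (A *m C) (B *m D).
Proof.
apply/matrixP => i j; rewrite kronE !mxE big_kidx big_distrl /=.
apply: eq_bigr => a _; rewrite big_distrr /=.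
by apply: eq_bigr => b _; rewrite !kronE kdiv_kidx kmod_kidx mulrACA.
Qed.

Lemma trmx_kron m1 n1 m2 n2 (A : 'M[R]_(m1, n1)) (B : 'M[R]_(m2, n2)) :
  (kron A B)^T = kron A^T B^T.
Proof. by apply/matrixP => i j; rewrite mxE !kronE !mxE. Qed.

Lemma kron1 m p : kron (1%:M : 'M[R]_m) (1%:M : 'M[R]_p) = 1%:M.
Proof.
apply/matrixP => i j; rewrite kronE !mxE.
have [->|ne] := eqVneq i j; first by rewrite !eqxx mulr1.
have [e1|] := eqVneq (kdiv i) (kdiv j); last by rewrite mul0r.
have [e2|] := eqVneq (kmod i) (kmod j); last by rewrite mulr0.
by move: ne; rewrite -(kidxK i) -(kidxK j) e1 e2 eqxx.
Qed.

Lemma kronZl m1 n1 m2 n2 (c : R) (A : 'M[R]_(m1, n1)) (B : 'M[R]_(m2, n2)) :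
  kron (c *: A) B = c *: kron A B.
Proof. by apply/matrixP => i j; rewrite !mxE mulrA. Qed.

Lemma kronZr m1 n1 m2 n2 (c : R) (A : 'M[R]_(m1, n1)) (B : 'M[R]_(m2, n2)) :
  kron A (c *: B) = c *: kron A B.
Proof. by apply/matrixP => i j; rewrite !mxE mulrCA. Qed.

Section CurlFree.
Variables (p m : nat) (D : 'M[R]_(m, p)) (T : 'M[R]_(p, m)).
Hypothesis DT : D *m T = 1%:M.

Lemma curl_free_gradient (u : 'cV[R]_(p * m)) (v : 'cV[R]_(m * p)) :
  kron (1%:M : 'M_m) D *m v = kron D (1%:M : 'M_m) *m u ->
  exists phi : 'cV[R]_(p * p),
    u = kron (1%:M : 'M_p) D *m phi /\ v = kron D (1%:M : 'M_p) *m phi.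
Proof.
move=> curl.
(* Integrate u in the second variable and v in the first; the curl condition
   makes the doubly integrated part of u cancel. *)
exists (kron 1%:M T *m u + kron T 1%:M *m v - kron (T *m D) T *m u); split.
  rewrite mulmxBr mulmxDr !mulmxA !kron_mulmx !mul1mx !mulmx1 DT kron1 mul1mx.
  have -> : kron T D = kron T 1%:M *m kron 1%:M D by rewrite kron_mulmx mul1mx mulmx1.
  have -> : kron (T *m D) 1%:M = kron T 1%:M *m kron D (1%:M : 'M_m).
    by rewrite kron_mulmx mul1mx.
  by rewrite -!mulmxA curl addrK.
rewrite mulmxBr mulmxDr !mulmxA !kron_mulmx !mul1mx !mulmx1 DT kron1 mul1mx.
by rewrite mulmxA DT mul1mx [_ + v]addrC addrK.
Qed.

End CurlFree.
End Kronecker.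

Section PseudoInverse.
Variables (R : realFieldType) (k : nat).
Implicit Types P Q X Y : 'M[R]_k.

Lemma mp_pinvP P : (exists X, is_mp_pinv P X) -> is_mp_pinv P (mp_pinv P).
Proof. exact: epsilon_spec. Qed.

Lemma mp_pinv_annihilator P Q Y : P *m Q = 0 -> Q *m P = 0 -> Q^T = Q ->
  is_mp_pinv Q Y -> P *m Y = 0 /\ Y *m P = 0.
Proof.
move=> PQ QP QT [_ YQY QYT YQT]; split.
  by rewrite -YQY -YQT trmx_mul QT !mulmxA PQ !mul0mx.
by rewrite -YQY -[Y *m Q *m Y]mulmxA -QYT trmx_mul QT -!mulmxA QP !mulmx0.
Qed.

(* With Z the inverse of P + Q, Z commutes with P and P Z P = P, so Z P Z is
   the pseudoinverse of P. *)
Lemma mp_pinv_orth P Q : P^T = P -> Q^T = Q -> P *m Q = 0 -> Q *m P = 0 ->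
  (P + Q) \in unitmx -> is_mp_pinv P (mp_pinv P).
Proof.
move=> PT QT PQ QP uA; apply: mp_pinvP.
set Z := invmx (P + Q).
have AP : (P + Q) *m P = P *m P by rewrite mulmxDl QP addr0.
have PA : P *m (P + Q) = P *m P by rewrite mulmxDr PQ addr0.
have ZP : Z *m P = P *m Z.
  rewrite -[Z *m P](mulmxK uA) -[Z *m P *m _]mulmxA PA -AP mulmxA.
  by rewrite mulVmx // mul1mx.
have PZP : P *m Z *m P = P by rewrite -mulmxA ZP mulmxA -PA mulmxK.
have ZT : Z^T = Z by rewrite trmx_inv linearD /= PT QT.
have ZPZP : Z *m P *m Z *m P = Z *m P by rewrite -!mulmxA [P *m (Z *m P)]mulmxA PZP.
exists (Z *m P *m Z); split.
- by rewrite !mulmxA !PZP.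
- by rewrite !mulmxA !ZPZP.
- by rewrite !mulmxA PZP trmx_mul ZT PT ZP.
- by rewrite ZPZP trmx_mul ZT PT ZP.
Qed.

Lemma invmx_eq_inner_inverse X P : P \in unitmx -> P *m X *m P = P -> X = invmx P.
Proof. by move=> uP PXP; rewrite -[X](mulKmx uP) -[_ *m X](mulmxK uP) PXP mulmxV // mulmx1. Qed.

Lemma invmx_add_orth P Q : P^T = P -> Q^T = Q -> P *m Q = 0 ->
  (P + Q) \in unitmx -> invmx (P + Q) = mp_pinv P + mp_pinv Q.
Proof.
move=> PT QT PQ uA.
have QP : Q *m P = 0 by rewrite -PT -QT -trmx_mul PQ trmx0.
have uA' : Q + P \in unitmx by rewrite addrC.
have hX := mp_pinv_orth PT QT PQ QP uA; have hY := mp_pinv_orth QT PT QP PQ uA'.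
have [PY YP] := mp_pinv_annihilator PQ QP QT hY.
have [QX XQ] := mp_pinv_annihilator QP PQ PT hX.
case: hX hY => [P1 _ _ _] [Q1 _ _ _].
apply/esym/invmx_eq_inner_inverse => //.
rewrite !mulmxDr !mulmxDl PY QX P1 Q1 -!mulmxA XQ YP !mulmx0 !mul0mx.
by rewrite !addr0 !add0r.
Qed.

Lemma trmx_mul_self_ge0 l (y : 'cV[R]_l) : 0 <= (y^T *m y) 0 0.
Proof. by rewrite mxE sumr_ge0 // => i _; rewrite mxE -expr2 sqr_ge0. Qed.

Lemma trmx_mul_self_eq0 l (y : 'cV[R]_l) : (y^T *m y) 0 0 = 0 -> y = 0.
Proof.
rewrite mxE => /psumr_eq0P y0; apply/matrixP => i j; rewrite ord1 mxE.
have /eqP : y^T 0 i * y i 0 = 0 by apply: y0 => // i0 _; rewrite mxE -expr2 sqr_ge0.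
by rewrite mxE mulf_eq0 orbb => /eqP.
Qed.

Lemma colspace_ker_tr_eq0 l (G : 'M[R]_(k, l)) phi (x : 'cV[R]_k) :
  x = G *m phi -> G^T *m x = 0 -> x = 0.
Proof.
move=> xG Gx; apply: trmx_mul_self_eq0.
by rewrite {1}xG trmx_mul -mulmxA Gx mulmx0 mxE.
Qed.

Lemma gram_add_mulmx_eq0 p q (B : 'M[R]_(p, k)) (C : 'M[R]_(q, k)) (x : 'cV[R]_k) :
  (B^T *m B + C^T *m C) *m x = 0 -> B *m x = 0 /\ C *m x = 0.
Proof.
move=> Ax.
have : (x^T *m (B^T *m B + C^T *m C) *m x) 0 0 = 0 by rewrite -mulmxA Ax mulmx0 mxE.
rewrite mulmxDr mulmxDl !mulmxA -!trmx_mul -!mulmxA mxE.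
move/eqP; rewrite paddr_eq0 ?trmx_mul_self_ge0 //.
by case/andP => /eqP/trmx_mul_self_eq0 -> /eqP/trmx_mul_self_eq0 ->.
Qed.

Lemma unitmx_gram_add p q (B : 'M[R]_(p, k)) (C : 'M[R]_(q, k)) :
  (forall x : 'cV_k, B *m x = 0 -> C *m x = 0 -> x = 0) ->
  B^T *m B + C^T *m C \in unitmx.
Proof.
move=> kerBC; rewrite -row_free_unit; apply: inj_row_free => w /(congr1 trmx).
rewrite trmx0 trmx_mul linearD /= !trmx_mul !trmxK => /gram_add_mulmx_eq0 [Bw Cw].
by rewrite -[w]trmxK (kerBC _ Bw Cw) trmx0.
Qed.

Lemma invmx_gram_add p q (B : 'M[R]_(p, k)) (C : 'M[R]_(q, k)) :
  B *m C^T = 0 -> B^T *m B + C^T *m C \in unitmx ->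
  invmx (B^T *m B + C^T *m C) = mp_pinv (B^T *m B) + mp_pinv (C^T *m C).
Proof.
move=> BC; apply: invmx_add_orth; rewrite ?trmx_mul ?trmxK //.
by rewrite -mulmxA (mulmxA B) BC mul0mx mulmx0.
Qed.

End PseudoInverse.

Section StaggeredGrid.
Variables (R : realType) (n : nat).
Local Notation M := (Mmat R n).
Local Notation I p := (1%:M : 'M[R]_p).

Definition antidiff_mx : 'M[R]_(n, n.-1) := \matrix_(i, j) ((i <= j)%N)%:R.

Lemma MmatE i j : M i j = ((i : nat) == j)%:R - ((i : nat) == j.+1)%:R.
Proof.
rewrite mxE; have [->|_] := eqVneq (i : nat) j; first by rewrite ltn_eqF // subr0.
by case: eqP; rewrite ?subr0 ?sub0r.
Qed.

Lemma sum_nat_eq_mul N (F : 'I_N -> R) l (hl : (l < N)%N) :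
  \sum_(i < N) (((i : nat) == l)%:R * F i) = F (Ordinal hl).
Proof.
rewrite (bigD1 (Ordinal hl)) //= eqxx mul1r big1 ?addr0 // => i ne.
by case: eqP => [e|]; [case/eqP: ne; apply: val_inj | rewrite mul0r].
Qed.

Lemma trMmat_antidiff : M^T *m antidiff_mx = 1%:M.
Proof.
apply/matrixP => k j; rewrite [LHS]mxE [RHS]mxE.
under eq_bigr => i _ do rewrite [M^T _ _]mxE MmatE mxE mulrBl.
have hk : (k < n)%N by have := ltn_ord k; lia.
have hk1 : (k.+1 < n)%N by have := ltn_ord k; lia.
rewrite sumrB (sum_nat_eq_mul (fun i : 'I_n => ((i <= j)%N)%:R) hk).
rewrite (sum_nat_eq_mul (fun i : 'I_n => ((i <= j)%N)%:R) hk1) /=.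
have [kj|kj|/val_inj ->] := ltngtP k j; last by rewrite eqxx subr0.
- by rewrite -val_eqE ltn_eqF // subrr.
- by rewrite -val_eqE gtn_eqF // subrr.
Qed.

Lemma inv_hstep_neq0 : (0 < n)%N -> (hstep R n)^-1 != 0.
Proof. by move=> n0; rewrite /hstep invr_eq0 mul1r invr_eq0 pnatr_eq0 -lt0n. Qed.

Lemma boldB_col_mx (u : 'cV[R]_(n * n.-1)) (v : 'cV[R]_(n.-1 * n)) :
  boldB R n *m col_mx u v =
  - ((hstep R n)^-1 *: (kron (I n) M *m u + kron M (I n) *m v)).
Proof.
by rewrite mul_row_col /Bux /Bvy /Bmat kronZr kronZl !mulNmx -!scalemxAl scalerDr opprD.
Qed.

Lemma boldC_col_mx (u : 'cV[R]_(n * n.-1)) (v : 'cV[R]_(n.-1 * n)) :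
  boldC R n *m col_mx u v =
  (hstep R n)^-1 *: (kron (I n.-1) M^T *m v - kron M^T (I n.-1) *m u).
Proof.
rewrite mul_row_col /Bqy /Bqx /Bmat kronZr kronZl !linearZ /= !trmx_kron !trmx1.
by rewrite -!scalemxAl mulNmx -scalerDr addrC.
Qed.

Lemma boldB_boldC_tr : boldB R n *m (boldC R n)^T = 0.
Proof.
rewrite tr_row_mx mul_row_col linearN /= !trmxK mulNmx mulmxN opprK mulNmx.
by rewrite /Bux /Bqy /Bvy /Bqx !kron_mulmx !mul1mx !mulmx1 subrr.
Qed.

Lemma boldB_boldC_ker (x : 'cV[R]_(n * n.-1 + n.-1 * n)) : (0 < n)%N ->
  boldB R n *m x = 0 -> boldC R n *m x = 0 -> x = 0.
Proof.
move=> n0; rewrite -[x]vsubmxK boldB_col_mx boldC_col_mx.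
set u := usubmx x; set v := dsubmx x => /eqP; rewrite oppr_eq0 scalemx_eq0.
rewrite (negPf (inv_hstep_neq0 n0)) /= => /eqP div0.
move/eqP; rewrite scalemx_eq0 (negPf (inv_hstep_neq0 n0)) subr_eq0 /= => /eqP curl.
have [phi [uE vE]] := curl_free_gradient trMmat_antidiff curl.
apply: (@colspace_ker_tr_eq0 _ _ _ (col_mx (kron (I n) M^T) (kron M^T (I n))) phi).
  by rewrite mul_col_mx -uE -vE.
by rewrite tr_col_mx !trmx_kron !trmx1 trmxK mul_row_col.
Qed.

End StaggeredGrid.

Theorem corollary1 (R : realType) (n : nat) (hn : (2 <= n)%N) :
  AN R n \in unitmx /\
  invmx (AN R n) =
    mp_pinv ((boldB R n)^T *m boldB R n) + mp_pinv ((boldC R n)^T *m boldC R n).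
Proof.
have uA : AN R n \in unitmx.
  by apply: unitmx_gram_add => x; apply: boldB_boldC_ker; apply: ltnW.
by split=> //; apply: invmx_gram_add => //; apply: boldB_boldC_tr.
Qed.
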